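(* Let $G$ be a connected groupoid with finite object set $G_0=\{e_1,\dots,e_r\}$, $A=\bigoplus_{i=1}^r A_i$ a unital ring with $A_i:=A_{e_i}\neq 0$, and $\alpha=(A_g,\alpha_g)_{g\in G}$ a unital global action of $G$ on $A$. If $A\subset A\star_\alpha G$ is a separable extension, then there exists $i\in\{1,\dots,r\}$ such that $A_i\subset A_i\star_{\alpha_{(e_i)}}G(e_i)$ is a separable extension.
   Context: A groupoid $G$ is a small category in which every morphism is invertible; $G_0$ is its object set (objects identified with identity morphisms), $s,t$ source and target; $gh$ is defined iff $s(g)=t(h)$; $G(e,f)$ is the set of morphisms from $e$ to $f$, $G(e):=G(e,e)$ is the isotropy group at $e$; $G$ is connected if $G(e,f)\neq\emptyset$ for all $e,f\in G_0$. A unital global action of $G$ on $A$ is a family $\alpha=(A_g,\alpha_g)_{g\in G}$ with $A_g=A_{t(g)}$ a two-sided ideal of $A$ of the form $A1_{t(g)}$, $1_{t(g)}$ a central idempotent, $\alpha_g:A_{s(g)}\to A_{t(g)}$ ring isomorphisms, $\alpha_e=\mathrm{id}_{A_e}$ for $e\in G_0$ and $\alpha_g\alpha_h=\alpha_{gh}$ whenever $s(g)=t(h)$. For $e\in G_0$, $\alpha_{(e)}=(A_e,\alpha_g)_{g\in G(e)}$ is the induced action of the group $G(e)$ on $A_e$, and $A_e\star_{\alpha_{(e)}}G(e)=\bigoplus_{g\in G(e)}A_e\delta_g$ is the skew group ring with $(a\delta_g)(b\delta_h)=a\alpha_g(b)\delta_{gh}$, containing $A_e$ as $A_e\delta_e$.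 The skew groupoid ring $A\star_\alpha G=\bigoplus_{g\in G}A_g\delta_g$ has multiplication $(a_g\delta_g)(b_h\delta_h)=\alpha_g(\alpha_{g^{-1}}(a_g)b_h)\delta_{gh}$ if $s(g)=t(h)$ and $0$ otherwise; it is unital with $1=\sum_{e\in G_0}1_e\delta_e$, and $A$ is regarded as a subring via $a\mapsto\sum_{e\in G_0}(a1_e)\delta_e$. A ring extension $R\subseteq S$ is separable if the multiplication map $S\otimes_R S\to S$ splits as a map of $(S,S)$-bimodules; equivalently there exists $x\in S\otimes_R S$ with $m(x)=1_S$ and $sx=xs$ for all $s\in S$. *)

From HB Require Import structures.
From mathcomp Require Import all_boot all_order all_algebra.
Set Implicit Arguments. Unset Strict Implicit. Unset Printing Implicit Defensive.
Import GRing.Theory.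
Local Open Scope ring_scope.

(* Objects form a (finite) type [obj]; the object e is identified with *)
(* the identity morphism [idm e].  [comp g h] is gh, meaningful only   *)
(* when src g = tgt h (its value otherwise is irrelevant).             *)
Record groupoid := Groupoid {
  obj : finType;
  mor : eqType;
  src : mor -> obj;
  tgt : mor -> obj;
  idm : obj -> mor;
  comp : mor -> mor -> mor;
  inv : mor -> mor;
  src_idm : forall e, src (idm e) = e;
  tgt_idm : forall e, tgt (idm e) = e;
  src_comp : forall g h, src g = tgt h -> src (comp g h) = src h;
  tgt_comp : forall g h, src g = tgt h -> tgt (comp g h) = tgt g;
  compA : forall g h k, src g = tgt h -> src h = tgt k ->
            comp g (comp h k) = comp (comp g h) k;
  comp_idml : forall g, comp (idm (tgt g)) g = g;
  comp_idmr : forall g, comp g (idm (src g)) = g;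
  src_inv : forall g, src (inv g) = tgt g;
  tgt_inv : forall g, tgt (inv g) = src g;
  comp_invr : forall g, comp g (inv g) = idm (tgt g);
  comp_invl : forall g, comp (inv g) g = idm (src g)
}.

Definition connected (G : groupoid) : Prop :=
  forall e f : obj G, exists g : mor G, src g = e /\ tgt g = f.

Section Action.
Variables (G : groupoid) (A : nzRingType).
Variables (one_ : obj G -> A) (alpha : mor G -> A -> A).

(* membership in the ideal A_e = A 1_e *)
Definition inA (e : obj G) (a : A) : Prop := a * one_ e = a.

Definition ring_iso_on (e f : obj G) (phi : A -> A) : Prop :=
  [/\ forall a, inA e a -> inA f (phi a),
      forall a b, inA e a -> inA e b -> phi (a + b) = phi a + phi b,
      forall a b, inA e a -> inA e b -> phi (a * b) = phi a * phi b,
      forall a b, inA e a -> inA e b -> phi a = phi b -> a = b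
    & forall b, inA f b -> exists2 a, inA e a & phi a = b].

Record unital_global_action : Prop := {
  one_idem : forall e, one_ e * one_ e = one_ e;
  one_central : forall e a, a * one_ e = one_ e * a;
  alpha_iso : forall g, ring_iso_on (src g) (tgt g) (alpha g);
  alpha_idm : forall e a, inA e a -> alpha (idm e) a = a;
  alpha_comp : forall g h a, src g = tgt h -> inA (src h) a ->
                 alpha g (alpha h a) = alpha (comp g h) a
}.

Definition direct_sum_decomp : Prop :=
  (forall a : A, exists x : obj G -> A,
      (forall e, inA e (x e)) /\ a = \sum_(e : obj G) x e) /\
  (forall x : obj G -> A, (forall e, inA e (x e)) ->
      \sum_(e : obj G) x e = 0 -> forall e, x e = 0).

(* relevant compositions (P = all of G, or P = G(e)), an element of    *)
(* A *_alpha P = (+)_{g in P} A_g delta_g is represented by a formal   *)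
(* sum s : seq (mor * A); the pair (g, a) stands for (a 1_{t(g)}) d_g  *)
(* if P g, and for 0 otherwise.  [sk_eval P s g] is the coefficient of *)
(* delta_g, so two formal sums denote the same element iff their       *)
(* [sk_eval] agree.  Addition is concatenation.                        *)
Definition sk_eval (P : pred (mor G)) (s : seq (mor G * A)) (k : mor G) : A :=
  \sum_(p <- s | P p.1 && (p.1 == k)) p.2 * one_ (tgt p.1).

(* (a_g d_g)(b_h d_h) = alpha_g(alpha_{g^-1}(a_g) b_h) d_{gh} if s(g)=t(h), else 0 *)
Definition sk_mul (P : pred (mor G)) (x y : seq (mor G * A)) : seq (mor G * A) :=
  flatten [seq [seq (comp p.1 q.1,
                     alpha p.1 (alpha (inv p.1) (p.2 * one_ (tgt p.1))
                                * (q.2 * one_ (tgt q.1))))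
               | q <- y & P q.1 && (src p.1 == tgt q.1)]
          | p <- x & P p.1].

(* f : S x S -> M is an R-balanced biadditive map, where S is the skew *)
(* ring (formal sums modulo sk_eval) and R is embedded via [emb].      *)
Definition balanced (P : pred (mor G)) (emb : A -> seq (mor G * A))
    (M : zmodType) (f : seq (mor G * A) -> seq (mor G * A) -> M) : Prop :=
  [/\ forall x x' y, sk_eval P x =1 sk_eval P x' -> f x y = f x' y,
      forall x y y', sk_eval P y =1 sk_eval P y' -> f x y = f x y',
      forall x x' y, f (x ++ x') y = f x y + f x' y,
      forall x y y', f x (y ++ y') = f x y + f x y'
    & forall x y a, f (sk_mul P x (emb a)) y = f x (sk_mul P (emb a) y)].

(* Separability of R ⊆ S: there is x = Σ_i x_i ⊗ y_i in S ⊗_R S with   *)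
(* m(x) = 1_S and s x = x s for all s in S.  Equality in S ⊗_R S is     *)
(* expressed through its universal property: two elements of S ⊗_R S   *)
(* are equal iff every R-balanced biadditive map (to any abelian group) *)
(* takes the same value on them.                                      *)
Definition separable_ext (P : pred (mor G)) (unit : seq (mor G * A))
    (emb : A -> seq (mor G * A)) : Prop :=
  exists xs : seq (seq (mor G * A) * seq (mor G * A)),
    sk_eval P (flatten [seq sk_mul P p.1 p.2 | p <- xs]) =1 sk_eval P unit /\
    forall (s : seq (mor G * A)) (M : zmodType)
           (f : seq (mor G * A) -> seq (mor G * A) -> M),
      balanced P emb f ->
      \sum_(p <- xs) f (sk_mul P s p.1) p.2 = \sum_(p <- xs) f p.1 (sk_mul P p.2 s).

(* A ⊆ A *_alpha G: all morphisms, 1 = Σ_e 1_e d_e, a ↦ Σ_e (a 1_e) d_e *)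
Definition full_pred : pred (mor G) := predT.
Definition full_unit : seq (mor G * A) := [seq (idm e, one_ e) | e <- enum (obj G)].
Definition full_emb (a : A) : seq (mor G * A) :=
  [seq (idm e, a * one_ e) | e <- enum (obj G)].

(* A_e ⊆ A_e *_{alpha_(e)} G(e): morphisms of the isotropy group G(e), *)
(* unit 1_e d_e, and a ∈ A_e ↦ a d_e (every a ∈ A_e is a * 1_e).        *)
Definition iso_pred (e : obj G) : pred (mor G) :=
  fun g => (src g == e) && (tgt g == e).
Definition iso_unit (e : obj G) : seq (mor G * A) := [:: (idm e, one_ e)].
Definition iso_emb (e : obj G) (a : A) : seq (mor G * A) := [:: (idm e, a * one_ e)].

End Action.

From Pilot Require Import Defs.
From HB Require Import structures.
From mathcomp Require Import all_boot all_order all_algebra.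
From Stdlib Require Import ClassicalEpsilon.
Set Implicit Arguments. Unset Strict Implicit. Unset Printing Implicit Defensive.
Import GRing.Theory.
Local Open Scope ring_scope.

(* Fix an object e and, by connectedness, morphisms g_f : f -> e.  View an
   element u of S = A *_alpha G as a matrix whose (t, s) entry collects the
   components of u along morphisms s -> t.  Transport along g_f identifies the
   entries of row e and of column e with elements of S_e = A_e *_alpha G(e):
     erow f u = sum_{h : f -> e} (a_h 1_e) d_{h g_f^-1},
     ecol f v = sum_{h : e -> f} alpha_{g_f}(a_h 1_f) d_{g_f h}.
   Then sum_f erow f u * ecol f v is the G(e)-part of u v, erow f is left and
   ecol f right S_e-linear, and elements of A pass from u to v through them as
   alpha_{g_f}(a 1_f).  Hence every A_e-balanced map phi on S_e pulls back to
   the A-balanced map (u, v) |-> sum_f phi (erow f u) (ecol f v) on S, and a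
   separability element sum_i x_i (x) y_i of A in S is carried to the
   separability element sum_{f, i} erow f x_i (x) ecol f y_i of A_e in S_e.
   So A_e is separable in S_e for every object e. *)

Section FormalSums.
Variables (G : groupoid) (A : nzRingType).
Variables (one_ : obj G -> A) (alpha : mor G -> A -> A).
Notation ev := (sk_eval one_).
Notation mul := (sk_mul one_ alpha).

Lemma sk_eval_nil P k : ev P [::] k = 0.
Proof. by rewrite /sk_eval big_nil. Qed.

Lemma sk_eval_cat P x y k : ev P (x ++ y) k = ev P x k + ev P y k.
Proof. by rewrite /sk_eval big_cat. Qed.

Lemma sk_eval_flatten P xs k : ev P (flatten xs) k = \sum_(x <- xs) ev P x k.
Proof.
elim: xs => [|x xs IH] /=; first by rewrite sk_eval_nil big_nil.
by rewrite sk_eval_cat IH big_cons.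
Qed.

Lemma sk_eval1 P g a k :
  ev P [:: (g, a)] k = if P g && (g == k) then a * one_ (tgt g) else 0.
Proof. by rewrite /sk_eval big_cons big_nil /=; case: ifP; rewrite ?addr0. Qed.

Lemma sk_eval_seq P x k : ev P x k = \sum_(p <- x) ev P [:: p] k.
Proof.
elim: x => [|p x IH]; first by rewrite sk_eval_nil big_nil.
by rewrite -cat1s sk_eval_cat IH big_cons.
Qed.

Lemma sk_mul_catl P x x' y : mul P (x ++ x') y = mul P x y ++ mul P x' y.
Proof. by rewrite /sk_mul filter_cat map_cat flatten_cat. Qed.

Lemma sk_mul_nilr P x : mul P x [::] = [::].
Proof. by rewrite /sk_mul; elim: x => //= p x; case: (P p.1). Qed.

Lemma sk_mul_notPl P p y : ~~ P p.1 -> mul P [:: p] y = [::].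
Proof. by move=> np; rewrite /sk_mul /= (negPf np). Qed.

Lemma sk_mul_expand P x y :
  mul P x y = flatten [seq flatten [seq mul P [:: p] [:: q] | q <- y] | p <- x].
Proof.
elim: x => [|p x IH] //=; rewrite -cat1s sk_mul_catl {}IH; congr (_ ++ _).
elim: y => [|q y IHy] /=; first by rewrite /sk_mul /=; case: ifP.
rewrite -IHy /sk_mul /=; case: (P p.1) => //=.
by case: ifP => //=; rewrite !cats0.
Qed.

Lemma sk_eval_mul_map P' (T : seq (mor G * A) -> seq (mor G * A)) P x y k :
  (forall z z', T (z ++ z') = T z ++ T z') -> T [::] = [::] ->
  ev P' (T (mul P x y)) k =
  \sum_(p <- x) \sum_(q <- y) ev P' (T (mul P [:: p] [:: q])) k.
Proof.
move=> Tcat Tnil; have Tflatten zs : T (flatten zs) = flatten (map T zs).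
  by elim: zs => [|z zs IH] //=; rewrite Tcat IH.
rewrite sk_mul_expand Tflatten sk_eval_flatten !big_map; apply: eq_bigr => p _.
by rewrite Tflatten sk_eval_flatten !big_map.
Qed.

Lemma sk_eval_mul P x y k :
  ev P (mul P x y) k = \sum_(p <- x) \sum_(q <- y) ev P (mul P [:: p] [:: q]) k.
Proof. exact: (@sk_eval_mul_map P id). Qed.

Lemma sk_eval_mul_flatten P xs ys k :
  ev P (mul P (flatten xs) (flatten ys)) k =
  \sum_(x <- xs) \sum_(y <- ys) ev P (mul P x y) k.
Proof.
rewrite sk_eval_mul big_flatten; apply: eq_bigr => x _ /=.
under [in RHS]eq_bigr => y _ do rewrite sk_eval_mul.
by rewrite [RHS]exchange_big; apply: eq_bigr => p _; rewrite big_flatten.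
Qed.

End FormalSums.

Section GroupoidCancel.
Variable G : groupoid.
Notation comp := (@Defs.comp G).
Notation inv := (@Defs.inv G).

Lemma compgKV (g h : mor G) : src h = src g -> comp (comp h (inv g)) g = h.
Proof.
move=> E; rewrite -Defs.compA ?comp_invl -?E ?comp_idmr ?tgt_inv //.
by rewrite src_inv.
Qed.

Lemma compgK (g k : mor G) : src k = tgt g -> comp (comp k g) (inv g) = k.
Proof. by move=> E; rewrite -Defs.compA ?comp_invr -?E ?comp_idmr ?tgt_inv. Qed.

Lemma compKg (g h : mor G) : tgt h = src g -> comp (inv g) (comp g h) = h.
Proof. by move=> E; rewrite Defs.compA ?comp_invl -?E ?comp_idml ?src_inv. Qed.

Lemma compKVg (g k : mor G) : tgt k = tgt g -> comp g (comp (inv g) k) = k.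
Proof.
by move=> E; rewrite Defs.compA ?comp_invr -?E ?comp_idml ?tgt_inv ?src_inv.
Qed.

End GroupoidCancel.

Section GlobalAction.
Variables (G : groupoid) (A : nzRingType).
Variables (one_ : obj G -> A) (alpha : mor G -> A -> A).
Hypothesis act : unital_global_action one_ alpha.
Notation inA := (inA one_).
Notation ev := (sk_eval one_).
Notation mul := (sk_mul one_ alpha).
Notation full := (@full_pred G).

Lemma inA_mul_one e a : inA e (a * one_ e).
Proof. by rewrite /Defs.inA -mulrA (one_idem act). Qed.

Lemma inA_sum e (I : Type) (r : seq I) (Q : pred I) (F : I -> A) :
  (forall i, Q i -> inA e (F i)) -> inA e (\sum_(i <- r | Q i) F i).
Proof.
move=> inF; elim/big_ind: _ => //; first by rewrite /Defs.inA mul0r.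
by move=> a b; rewrite /Defs.inA mulrDl => -> ->.
Qed.

Lemma alpha_inA g a : inA (src g) a -> inA (tgt g) (alpha g a).
Proof. by case: (alpha_iso act g) => h _ _ _ _; apply: h. Qed.

Lemma alpha_mul_one_inA g a : inA (tgt g) (alpha g (a * one_ (src g))).
Proof. exact/alpha_inA/inA_mul_one. Qed.

Lemma alphaM g a b :
  inA (src g) a -> inA (src g) b -> alpha g (a * b) = alpha g a * alpha g b.
Proof. by case: (alpha_iso act g) => _ _ h _ _; apply: h. Qed.

Lemma alphaD g a b :
  inA (src g) a -> inA (src g) b -> alpha g (a + b) = alpha g a + alpha g b.
Proof. by case: (alpha_iso act g) => _ h _ _ _; apply: h. Qed.

Lemma alpha0 g : alpha g 0 = 0.
Proof.
have in0 : inA (src g) 0 by rewrite /Defs.inA mul0r.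
by apply: (@addrI _ (alpha g 0)); rewrite -alphaD ?addr0.
Qed.

Lemma alpha_sum g (I : Type) (r : seq I) (Q : pred I) (F : I -> A) :
  (forall i, Q i -> inA (src g) (F i)) ->
  alpha g (\sum_(i <- r | Q i) F i) = \sum_(i <- r | Q i) alpha g (F i).
Proof.
move=> inF; elim: r => [|i r IH]; first by rewrite !big_nil alpha0.
rewrite !big_cons; case: ifP => Qi //.
by rewrite alphaD ?IH //; [apply: inF | apply: inA_sum].
Qed.

Lemma alphaK g a : inA (tgt g) a -> alpha g (alpha (Defs.inv g) a) = a.
Proof.
move=> ina; rewrite (alpha_comp act) ?tgt_inv ?src_inv // comp_invr.
exact: (alpha_idm act).
Qed.

Lemma sk_eval_inA P x k : inA (tgt k) (ev P x k).
Proof. by apply: inA_sum => -[g a] /= /andP[_ /eqP <-]; apply: inA_mul_one. Qed.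

Lemma sk_mul1 P g a h b :
  mul P [:: (g, a)] [:: (h, b)] =
  if P g && P h && (src g == tgt h) then
    [:: (Defs.comp g h, a * one_ (tgt g) * alpha g (b * one_ (tgt h)))]
  else [::].
Proof.
rewrite /sk_mul /=; case: (P g) => //=; case: (P h) => //=; case: eqP => //= E.
have ina : inA (tgt g) (a * one_ (tgt g)) by apply: inA_mul_one.
have inb : inA (src g) (b * one_ (tgt h)) by rewrite E; apply: inA_mul_one.
rewrite alphaM ?alphaK //.
by rewrite -(tgt_inv g); apply: alpha_inA; rewrite src_inv.
Qed.

Lemma sk_eval_mul_full_emb x a k :
  ev full (mul full x (full_emb one_ a)) k =
  ev full x k * alpha k (a * one_ (src k)).
Proof.
rewrite sk_eval_mul [ev _ x k]sk_eval_seq mulr_suml.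
apply: eq_bigr => -[h c] _; rewrite /full_emb big_map big_enum /=.
rewrite (bigD1 (src h)) //= big1 ?addr0 => [|f ne]; last first.
  by rewrite sk_mul1 /full_pred /= tgt_idm eq_sym (negPf ne) sk_eval_nil.
rewrite sk_mul1 /full_pred /= tgt_idm eqxx /= !sk_eval1 /full_pred /= comp_idmr.
case: eqP => [->|]; last by rewrite mul0r.
rewrite -[a * _ * _]mulrA (one_idem act) -!mulrA; congr (_ * (_ * _)).
exact: alpha_mul_one_inA.
Qed.

Lemma sk_eval_full_emb_mul y a k :
  ev full (mul full (full_emb one_ a) y) k =
  a * one_ (tgt k) * ev full y k.
Proof.
rewrite sk_eval_mul exchange_big [ev _ y k]sk_eval_seq mulr_sumr.
apply: eq_bigr => -[h c] _; rewrite /full_emb big_map big_enum /=.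
rewrite (bigD1 (tgt h)) //= big1 ?addr0 => [|f ne]; last first.
  by rewrite sk_mul1 /full_pred /= src_idm (negPf ne) sk_eval_nil.
rewrite sk_mul1 /full_pred /= src_idm eqxx /= !sk_eval1 /full_pred /= comp_idml.
case: eqP => [->|]; last by rewrite mulr0.
rewrite tgt_idm (alpha_idm act); last exact: inA_mul_one.
by rewrite -[a * _ * _]mulrA (one_idem act) -!mulrA (one_idem act).
Qed.

Lemma sk_eval_mul_iso_emb e x b k :
  ev (iso_pred e) (mul (iso_pred e) x (iso_emb one_ e b)) k =
  ev (iso_pred e) x k * alpha k (b * one_ e).
Proof.
rewrite sk_eval_mul [ev _ x k]sk_eval_seq mulr_suml.
apply: eq_bigr => -[h c] _; rewrite /iso_emb big_cons big_nil addr0 sk_mul1 sk_eval1 /=.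
rewrite /iso_pred /= src_idm tgt_idm !eqxx /= andbT.
case Ih: ((src h == e) && (tgt h == e)) => /=; last by rewrite sk_eval_nil mul0r.
case/andP: Ih => /eqP sh /eqP th; rewrite sh eqxx /= sk_eval1.
have -> : Defs.comp h (idm e) = h by rewrite -sh comp_idmr.
rewrite sh th !eqxx /=; case: eqP => [<-|]; last by rewrite mul0r.
rewrite -[b * _ * _]mulrA (one_idem act) -!mulrA; congr (_ * (_ * _)).
by have := alpha_mul_one_inA h b; rewrite sh th.
Qed.

Lemma sk_eval_iso_emb_mul e y b k :
  ev (iso_pred e) (mul (iso_pred e) (iso_emb one_ e b) y) k =
  b * one_ e * ev (iso_pred e) y k.
Proof.
rewrite sk_eval_mul /iso_emb big_cons big_nil addr0 [ev _ y k]sk_eval_seq.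
rewrite mulr_sumr; apply: eq_bigr => -[h c] _.
rewrite sk_mul1 sk_eval1 /iso_pred /= src_idm tgt_idm !eqxx /=.
case Ih: ((src h == e) && (tgt h == e)) => /=; last by rewrite sk_eval_nil mulr0.
case/andP: Ih => /eqP sh /eqP th; rewrite th eqxx /= sk_eval1.
have -> : Defs.comp (idm e) h = h by rewrite -th comp_idml.
rewrite sh th !eqxx /=; case: (h =P k) => _; last by rewrite mulr0.
rewrite (alpha_idm act); last exact: inA_mul_one.
by rewrite -[b * _ * _]mulrA (one_idem act) -!mulrA (one_idem act).
Qed.

End GlobalAction.

Section Transport.
Variables (G : groupoid) (A : nzRingType).
Variables (one_ : obj G -> A) (alpha : mor G -> A -> A).
Hypothesis act : unital_global_action one_ alpha.
Variables (e : obj G) (g : obj G -> mor G).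
Hypothesis src_g : forall f, src (g f) = f.
Hypothesis tgt_g : forall f, tgt (g f) = e.
Notation inA := (inA one_).
Notation comp := (@Defs.comp G).
Notation inv := (@Defs.inv G).
Notation iso := (iso_pred e).
Notation full := (@full_pred G).
Notation ev := (sk_eval one_).
Notation mul := (sk_mul one_ alpha).

Definition erow_term f (p : mor G * A) : seq (mor G * A) :=
  if (src p.1 == f) && (tgt p.1 == e) then
    [:: (comp p.1 (inv (g f)), p.2 * one_ e)] else [::].
Definition erow f x := flatten (map (erow_term f) x).

Definition ecol_term f (p : mor G * A) : seq (mor G * A) :=
  if (src p.1 == e) && (tgt p.1 == f) then
    [:: (comp (g f) p.1, alpha (g f) (p.2 * one_ f))] else [::].
Definition ecol f x := flatten (map (ecol_term f) x).

Lemma erow_cat f x y : erow f (x ++ y) = erow f x ++ erow f y.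
Proof. by rewrite /erow map_cat flatten_cat. Qed.

Lemma ecol_cat f x y : ecol f (x ++ y) = ecol f x ++ ecol f y.
Proof. by rewrite /ecol map_cat flatten_cat. Qed.

Lemma erow1 f p : erow f [:: p] = erow_term f p.
Proof. by rewrite /erow /= cats0. Qed.

Lemma ecol1 f p : ecol f [:: p] = ecol_term f p.
Proof. by rewrite /ecol /= cats0. Qed.

Lemma inA_alpha_g f a : inA e (alpha (g f) (a * one_ f)).
Proof. by have := alpha_mul_one_inA act (g f) a; rewrite src_g tgt_g. Qed.

Lemma erow_index f h k :
  [&& src h == f, tgt h == e, iso (comp h (inv (g f))) & comp h (inv (g f)) == k]
  = iso k && (h == comp k (g f)).
Proof.
apply/idP/idP.
  case/and4P => /eqP sh /eqP th _ /eqP <-.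
  rewrite compgKV ?eqxx ?andbT ?src_g //.
  by rewrite /iso_pred src_comp ?tgt_comp ?src_inv ?tgt_inv ?tgt_g ?src_g ?th ?eqxx.
case/andP => /andP[/eqP sk /eqP tk] /eqP ->.
rewrite src_comp ?tgt_comp ?src_g ?tgt_g ?tk ?eqxx //= compgK ?tgt_g ?eqxx ?andbT //.
by rewrite /iso_pred sk tk eqxx.
Qed.

Lemma ecol_index f h k :
  [&& src h == e, tgt h == f, iso (comp (g f) h) & comp (g f) h == k]
  = iso k && (h == comp (inv (g f)) k).
Proof.
apply/idP/idP.
  case/and4P => /eqP sh /eqP th _ /eqP <-.
  rewrite compKg ?eqxx ?andbT ?src_g //.
  by rewrite /iso_pred src_comp ?tgt_comp ?tgt_g ?src_g ?th ?sh ?eqxx.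
case/andP => /andP[/eqP sk /eqP tk] /eqP ->.
rewrite src_comp ?tgt_comp ?src_inv ?tgt_inv ?src_g ?tgt_g ?tk ?sk ?eqxx //=.
by rewrite compKVg ?tgt_g ?eqxx ?andbT // /iso_pred sk tk eqxx.
Qed.

Lemma sk_eval_erow_term f p k :
  ev iso (erow_term f p) k = if iso k then ev full [:: p] (comp k (g f)) else 0.
Proof.
case: p => h a; rewrite /erow_term /= sk_eval1 /full_pred /=.
have := erow_index f h k; case: ifP => C.
  case/andP: C => /eqP sh /eqP th; rewrite sh th !eqxx /= => K.
  rewrite sk_eval1 /= K; case: (iso k) => //; case: eqP => // Eh; subst h.
  rewrite /= tgt_comp ?th -?mulrA ?(one_idem act) //.
  by rewrite tgt_inv sh src_g.
move=> _; rewrite sk_eval_nil; case Ik: (iso k) => //.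
case: eqP => // Eh; subst h; move: Ik C => /andP[/eqP sk /eqP tk].
by rewrite src_comp ?tgt_comp ?tgt_g ?src_g ?tk ?eqxx.
Qed.

Lemma sk_eval_ecol_term f p k :
  ev iso (ecol_term f p) k =
  if iso k then alpha (g f) (ev full [:: p] (comp (inv (g f)) k)) else 0.
Proof.
case: p => h a; rewrite /ecol_term /= sk_eval1 /full_pred /=.
have := ecol_index f h k; case: ifP => C.
  case/andP: C => /eqP sh /eqP th; rewrite sh th !eqxx /= => K.
  rewrite sk_eval1 /= K; case: (iso k) => //=; case: eqP => Eh; last first.
    by rewrite (alpha0 act).
  by subst h; rewrite tgt_comp ?src_g ?th // tgt_g; apply: inA_alpha_g.
move=> _; rewrite sk_eval_nil; case Ik: (iso k) => //.
case: eqP => Eh; first subst h; last by rewrite (alpha0 act).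
move: Ik C => /andP[/eqP sk /eqP tk].
by rewrite src_comp ?tgt_comp ?src_inv ?tgt_inv ?tgt_g ?src_g ?tk ?sk ?eqxx.
Qed.

Lemma sk_eval_erow f x k :
  ev iso (erow f x) k = if iso k then ev full x (comp k (g f)) else 0.
Proof.
rewrite /erow sk_eval_flatten big_map; under eq_bigr do rewrite sk_eval_erow_term.
by case: (iso k); [rewrite [RHS]sk_eval_seq | rewrite big1].
Qed.

Lemma sk_eval_ecol f x k :
  ev iso (ecol f x) k =
  if iso k then alpha (g f) (ev full x (comp (inv (g f)) k)) else 0.
Proof.
rewrite /ecol sk_eval_flatten big_map; under eq_bigr do rewrite sk_eval_ecol_term.
case Ik: (iso k); last by rewrite big1.
rewrite [in RHS]sk_eval_seq (alpha_sum act) // => p _.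
have := sk_eval_inA act full [:: p] (comp (inv (g f)) k).
rewrite tgt_comp ?tgt_inv ?src_g // src_inv tgt_g.
by case/andP: Ik => _ /eqP.
Qed.

Lemma erow_mul1 f h a q k : iso h ->
  ev iso (erow f (mul full [:: (h, a)] [:: q])) k =
  ev iso (mul iso [:: (h, a)] (erow_term f q)) k.
Proof.
case/andP=> /eqP sh /eqP th; case: q => h' b.
rewrite (sk_mul1 act) /full_pred /= /erow_term /=.
case E: ((src h' == f) && (tgt h' == e)); last first.
  rewrite sk_mul_nilr sk_eval_nil; case: eqP => [E2|_]; last by rewrite sk_eval_nil.
  rewrite erow1 /erow_term /= src_comp // tgt_comp // th eqxx andbT.
  by move: E; rewrite -E2 sh eqxx andbT => ->; apply: sk_eval_nil.
case/andP: E => /eqP sh' /eqP th'.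
rewrite sh th' eqxx /= erow1 /erow_term /= src_comp ?tgt_comp ?sh' ?th ?th' ?eqxx //=.
rewrite (sk_mul1 act) /iso_pred /= sh th.
rewrite src_comp ?tgt_comp ?src_inv ?tgt_inv ?tgt_g ?th' ?src_g ?sh' ?eqxx //=.
rewrite !sk_eval1 -Defs.compA ?tgt_inv ?src_g ?sh' ?th' ?sh //; case: ifP => // _.
rewrite -!mulrA (one_idem act); congr (_ * (_ * _)).
have -> : tgt (comp h (comp h' (inv (g f)))) = e.
  by rewrite !tgt_comp ?th ?th' ?sh ?tgt_inv ?src_g ?sh'.
by rewrite (one_idem act).
Qed.

Lemma ecol_mul1 f h a q k : iso h ->
  ev iso (ecol f (mul full [:: q] [:: (h, a)])) k =
  ev iso (mul iso (ecol_term f q) [:: (h, a)]) k.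
Proof.
case/andP=> /eqP sh /eqP th; case: q => h' b.
rewrite (sk_mul1 act) /full_pred /= /ecol_term /= th.
case E: ((src h' == e) && (tgt h' == f)); last first.
  rewrite sk_eval_nil; case: eqP => [E2|_]; last by rewrite sk_eval_nil.
  rewrite ecol1 /ecol_term /= src_comp ?th // tgt_comp ?th // sh eqxx /=.
  by move: E; rewrite E2 eqxx /= => ->; apply: sk_eval_nil.
case/andP: E => /eqP sh' /eqP th'.
rewrite sh' eqxx /= ecol1 /ecol_term /= src_comp ?tgt_comp ?sh' ?th ?th' ?sh ?eqxx //=.
rewrite (sk_mul1 act) /iso_pred /= sh th.
rewrite src_comp ?tgt_comp ?tgt_g ?th' ?src_g ?sh' ?eqxx //=.
rewrite !sk_eval1 Defs.compA ?src_g ?sh' ?th' ?th //; case: ifP => // _.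
have inA_h'a : inA f (alpha h' (a * one_ e)).
  by have := alpha_mul_one_inA act h' a; rewrite sh' th'.
rewrite -[_ * _ * one_ f]mulrA inA_h'a inA_alpha_g.
rewrite (alphaM act) ?src_g //; try solve [exact: inA_h'a | exact: (inA_mul_one act)].
by rewrite (alpha_comp act) ?src_g ?th' ?sh' //; apply: (inA_mul_one act).
Qed.

Lemma erow_term_nil f p : f != src p.1 -> erow_term f p = [::].
Proof. by rewrite /erow_term eq_sym => /negPf ->. Qed.

Lemma erow_ecol_term_mul h a h' b k :
  ev iso (mul iso (erow_term (src h) (h, a)) (ecol_term (src h) (h', b))) k =
  if iso k then ev full (mul full [:: (h, a)] [:: (h', b)]) k else 0.
Proof.
rewrite /erow_term /ecol_term /= eqxx /= (sk_mul1 act) /full_pred /=.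
case Th: (tgt h == e) => /=; last first.
  rewrite sk_eval_nil; case Ik: (iso k) => //.
  case: (src h =P tgt h') => E; rewrite ?sk_eval1 ?sk_eval_nil //=.
  case: eqP => // E2; move: Ik Th; rewrite -E2 /iso_pred tgt_comp //.
  by case/andP=> _ ->.
case Sh': (src h' == e) => /=; last first.
  rewrite sk_mul_nilr sk_eval_nil; case Ik: (iso k) => //.
  case: (src h =P tgt h') => E; rewrite ?sk_eval1 ?sk_eval_nil //=.
  case: eqP => // E2; move: Ik Sh'; rewrite -E2 /iso_pred src_comp //.
  by case/andP=> ->.
rewrite eq_sym; case Th': (src h == tgt h') => /=; last first.
  by rewrite sk_mul_nilr !sk_eval_nil; case: ifP.
move/eqP: Th => th; move/eqP: Sh' => sh'; move/eqP: Th' => th'.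
rewrite (sk_mul1 act) /iso_pred /=.
rewrite src_comp ?tgt_comp ?src_inv ?tgt_inv ?src_g ?tgt_g ?th ?sh' ?th' ?eqxx //=.
rewrite !sk_eval1 /= src_comp ?src_g ?sh' ?eqxx //=.
have -> : comp (comp h (inv (g (tgt h')))) (comp (g (tgt h')) h') = comp h h'.
  rewrite -Defs.compA ?compKg ?tgt_inv ?src_g ?th' // tgt_comp ?tgt_g ?src_g //.
  by rewrite src_inv.
rewrite sk_eval1 /= src_comp ?tgt_comp ?th ?sh' ?th' ?eqxx //=.
case: (comp h h' =P k) => [<-|_]; last by case: ifP.
rewrite /iso_pred src_comp ?tgt_comp ?th ?sh' ?th' ?eqxx //=.
have alpha_transport : alpha (comp h (inv (g (tgt h'))))
    (alpha (g (tgt h')) (b * one_ (tgt h'))) = alpha h (b * one_ (tgt h')).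
  rewrite (alpha_comp act) ?src_comp ?tgt_g ?src_inv ?tgt_inv ?src_g ?th' //.
    by rewrite compgKV ?src_g.
  exact: (inA_mul_one act).
by rewrite inA_alpha_g alpha_transport -[a * _ * _]mulrA (one_idem act).
Qed.

Lemma sum_erow_ecol_term p q k :
  \sum_(f <- enum (obj G)) ev iso (mul iso (erow_term f p) (ecol_term f q)) k =
  if iso k then ev full (mul full [:: p] [:: q]) k else 0.
Proof.
case: p q => h a [h' b]; rewrite big_enum /= (bigD1 (src h)) //= big1 ?addr0.
  exact: erow_ecol_term_mul.
by move=> f ne; rewrite erow_term_nil ?sk_eval_nil.
Qed.

Lemma erow_mull f s u k :
  ev iso (erow f (mul full [seq p <- s | iso p.1] u)) k =
  ev iso (mul iso s (erow f u)) k.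
Proof.
rewrite (@sk_eval_mul_map G A one_ alpha iso (erow f)) //; last first.
  by move=> *; rewrite erow_cat.
rewrite -{2}[s]flatten_seq1 /erow sk_eval_mul_flatten big_filter big_map.
rewrite big_mkcond /=; apply: eq_bigr => -[h a] _; rewrite big_map.
case: ifP => Ih; last first.
  by rewrite big1 // => q _; rewrite sk_mul_notPl ?Ih ?sk_eval_nil.
by apply: eq_bigr => q _; rewrite erow_mul1.
Qed.

Lemma sk_eval_mul_notPr P x p k : ~~ P p.1 -> ev P (mul P x [:: p]) k = 0.
Proof.
case: p => h' b /= np; rewrite sk_eval_mul big1 // => -[h a] _.
by rewrite big_cons big_nil addr0 (sk_mul1 act) (negPf np) andbF /= sk_eval_nil.
Qed.

Lemma ecol_mulr f s v k :
  ev iso (ecol f (mul full v [seq p <- s | iso p.1])) k =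
  ev iso (mul iso (ecol f v) s) k.
Proof.
rewrite (@sk_eval_mul_map G A one_ alpha iso (ecol f)) //; last first.
  by move=> *; rewrite ecol_cat.
rewrite -{2}[s]flatten_seq1 /ecol sk_eval_mul_flatten big_map.
apply: eq_bigr => q _; rewrite big_filter big_map big_mkcond /=.
apply: eq_bigr => -[h a] _; case: ifP => Ih; last by rewrite sk_eval_mul_notPr ?Ih.
by rewrite ecol_mul1.
Qed.

Lemma sum_erow_ecol_mul u v k :
  \sum_(f <- enum (obj G)) ev iso (mul iso (erow f u) (ecol f v)) k =
  if iso k then ev full (mul full u v) k else 0.
Proof.
under eq_bigr => f _ do rewrite /erow /ecol sk_eval_mul_flatten big_map.
rewrite exchange_big /=.
transitivity (\sum_(p <- u) \sum_(q <- v)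
    (if iso k then ev full (mul full [:: p] [:: q]) k else 0)); last first.
  by case: (iso k); [rewrite sk_eval_mul | rewrite big1 // => p _; rewrite big1].
apply: eq_bigr => p _; under eq_bigr => f _ do rewrite big_map.
by rewrite exchange_big /=; apply: eq_bigr => q _; apply: sum_erow_ecol_term.
Qed.

Lemma erow_mul_emb f x a :
  ev iso (erow f (mul full x (full_emb one_ a))) =1
  ev iso (mul iso (erow f x) (iso_emb one_ e (alpha (g f) (a * one_ f)))).
Proof.
move=> k; rewrite sk_eval_erow (sk_eval_mul_iso_emb act) sk_eval_erow.
rewrite (sk_eval_mul_full_emb act).
case/boolP: (iso k) => [/andP[/eqP sk /eqP tk]|_]; last by rewrite mul0r.
rewrite src_comp ?src_g ?tgt_g // inA_alpha_g (alpha_comp act) ?tgt_g //.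
by rewrite src_g; apply: (inA_mul_one act).
Qed.

Lemma ecol_emb_mul f y a :
  ev iso (ecol f (mul full (full_emb one_ a) y)) =1
  ev iso (mul iso (iso_emb one_ e (alpha (g f) (a * one_ f))) (ecol f y)).
Proof.
move=> k; rewrite sk_eval_ecol (sk_eval_iso_emb_mul act) sk_eval_ecol.
rewrite (sk_eval_full_emb_mul act).
case/boolP: (iso k) => [/andP[/eqP sk /eqP tk]|_]; last by rewrite mulr0.
have tf : tgt (comp (inv (g f)) k) = f.
  by rewrite tgt_comp ?tgt_inv ?src_g // src_inv tgt_g.
rewrite tf inA_alpha_g (alphaM act) ?src_g //; first exact: (inA_mul_one act).
by rewrite -{1}tf; apply: (sk_eval_inA act).
Qed.

Lemma balanced_pullback (M : zmodType) (phi : seq (mor G * A) -> seq (mor G * A) -> M) :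
  balanced one_ alpha iso (iso_emb one_ e) phi ->
  balanced one_ alpha full (full_emb one_)
    (fun u v => \sum_(f <- enum (obj G)) phi (erow f u) (ecol f v)).
Proof.
case=> phi_evl phi_evr phi_catl phi_catr phi_emb; split.
- move=> x x' y E; apply: eq_bigr => f _; apply: phi_evl => k.
  by rewrite !sk_eval_erow E.
- move=> x y y' E; apply: eq_bigr => f _; apply: phi_evr => k.
  by rewrite !sk_eval_ecol E.
- move=> x x' y; rewrite -big_split; apply: eq_bigr => f _.
  by rewrite erow_cat phi_catl.
- move=> x y y'; rewrite -big_split; apply: eq_bigr => f _.
  by rewrite ecol_cat phi_catr.
- move=> x y a; apply: eq_bigr => f _.
  rewrite (phi_evl _ _ _ (erow_mul_emb f x a)) phi_emb.
  by apply: phi_evr => k; rewrite ecol_emb_mul.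
Qed.

Definition transport_sep_elem (xs : seq (seq (mor G * A) * seq (mor G * A))) :=
  flatten [seq [seq (erow f p.1, ecol f p.2) | p <- xs] | f <- enum (obj G)].

Lemma transport_sep_elem_mul xs k :
  ev iso (flatten [seq mul iso p.1 p.2 | p <- transport_sep_elem xs]) k =
  if iso k then ev full (flatten [seq mul full p.1 p.2 | p <- xs]) k else 0.
Proof.
rewrite sk_eval_flatten /transport_sep_elem big_map big_flatten /= big_map.
under eq_bigr => f _ do rewrite big_map /=.
rewrite exchange_big /=; under eq_bigr => p _ do rewrite sum_erow_ecol_mul.
case: (iso k); last by rewrite big1.
by rewrite sk_eval_flatten big_map.
Qed.

Lemma iso_unit_full_unit k :
  ev iso (iso_unit one_ e) k = if iso k then ev full (full_unit one_) k else 0.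
Proof.
rewrite /iso_unit /full_unit sk_eval1 sk_eval_seq big_map big_enum /=.
rewrite /iso_pred /full_pred /= src_idm tgt_idm eqxx /=.
case Ik: (_ && _); last first.
  by case: eqP => // E; rewrite -E src_idm tgt_idm eqxx in Ik.
rewrite (bigD1 e) //= big1 ?addr0 => [|f ne]; first by rewrite sk_eval1 tgt_idm.
case/andP: Ik => _ /eqP tk; rewrite sk_eval1 /=.
by case: eqP => // E; rewrite -E tgt_idm in tk; rewrite tk eqxx in ne.
Qed.

Lemma separable_ext_iso :
  separable_ext one_ alpha full (full_unit one_) (full_emb one_) ->
  separable_ext one_ alpha iso (iso_unit one_ e) (iso_emb one_ e).
Proof.
case=> xs [xs_mul xs_central]; exists (transport_sep_elem xs); split.
  by move=> k; rewrite transport_sep_elem_mul iso_unit_full_unit xs_mul.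
move=> s M phi phi_bal.
(* s is viewed in the full skew ring by dropping its terms outside G(e). *)
have /= central := xs_central [seq p <- s | iso p.1] M _ (balanced_pullback phi_bal).
case: phi_bal => phi_evl phi_evr _ _ _.
rewrite /transport_sep_elem !big_flatten !big_map.
under eq_bigr => f _ do rewrite big_map.
under [RHS]eq_bigr => f _ do rewrite big_map.
rewrite exchange_big [RHS]exchange_big -!enumT.
transitivity (\sum_(p <- xs) \sum_(f <- enum (obj G))
  phi (erow f (mul full [seq p <- s | iso p.1] p.1)) (ecol f p.2)).
  apply: eq_bigr => p _; apply: eq_bigr => f _.
  by apply: phi_evl => k; rewrite erow_mull.
rewrite central; apply: eq_bigr => p _; apply: eq_bigr => f _.
by apply: phi_evr => k; rewrite ecol_mulr.
Qed.

End Transport.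

Lemma direct_sum_decomp_inhabited (G : groupoid) (A : nzRingType) (one_ : obj G -> A) :
  direct_sum_decomp one_ -> inhabited (obj G).
Proof.
case: (pickP (@predT (obj G))) => [e _ _|none [decomp _]]; first by constructor.
have [x [_]] := decomp 1; rewrite big_pred0 // => /eqP.
by rewrite oner_eq0.
Qed.

Lemma connected_paths_to (G : groupoid) (e : obj G) :
  connected G ->
  exists g : obj G -> mor G, (forall f, src (g f) = f) /\ (forall f, tgt (g f) = e).
Proof.
move=> conn; pose path f := constructive_indefinite_description _ (conn f e).
by exists (fun f => proj1_sig (path f)); split=> f; case: (proj2_sig (path f)).
Qed.

Theorem theorem4p4 (G : groupoid) (A : nzRingType)
    (one_ : obj G -> A) (alpha : mor G -> A -> A) :
  connected G ->
  unital_global_action one_ alpha ->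
  direct_sum_decomp one_ ->
  (forall e : obj G, one_ e != 0) ->
  separable_ext one_ alpha (@full_pred G) (full_unit one_) (full_emb one_) ->
  exists e : obj G,
    separable_ext one_ alpha (iso_pred e) (iso_unit one_ e) (iso_emb one_ e).
Proof.
move=> conn act decomp _ sep.
have [e] := direct_sum_decomp_inhabited decomp.
have [g [src_g tgt_g]] := connected_paths_to e conn.
by exists e; apply: (separable_ext_iso act src_g tgt_g).
Qed.
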